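(* Let $d\ge2$, let $\mathcal{G}$ be a strongly maximal stochastic subgroup of $\mathrm{O}(d^2)$, and let $G$ be its orbital germ. Then $\overline{\mathrm{conv}}(G)$ is the unique qplex $Q$ such that $\mathcal{G}=\mathcal{G}(Q)$.
   Context: Fix an integer $d\ge 2$. $\mathrm{O}(d^2)$ is the group of real orthogonal $d^2\times d^2$ matrices. $\langle\cdot,\cdot\rangle$ is the standard inner product on $\mathbb{R}^{d^2}$, $\|\cdot\|$ the Euclidean norm; $\overline{\mathrm{conv}}$ denotes closed convex hull. $\Delta=\{p\in\mathbb{R}^{d^2}: p(i)\ge0,\ \sum_ip(i)=1\}$; $H=\{u\in\mathbb{R}^{d^2}:\sum_i u(i)=1\}$; $c=(1/d^2,\dots,1/d^2)$. For $A\subseteq H$ the polar is $A^*=\{u\in H:\langle u,v\rangle\ge\frac{1}{d(d+1)}\ \forall v\in A\}$. Out-ball $B_{\rm o}=\{u\in H:\|u-c\|\le r_{\rm o}\}$, $r_{\rm o}^2=\frac{d-1}{d^2(d+1)}$. A qplex is a set $Q\subseteq\Delta\cap B_{\rm o}$ with $Q^*=Q$. A measurement is an array $r(i|j)\ge0$ with $\sum_i r(i|j)=1$ for every $j$; for $q\in Q$, $q_r(i)=\sum_j[(d+1)q(j)-\frac1d]r(i|j)$; it is $Q$-preserving if $\{q_r:q\in Q\}=Q$; its stretched measurement matrix is $R_{ij}=(d+1)r(i|j)-\frac1d\sum_k r(i|k)$. The preservation group $\mathcal{G}(Q)$ is the set of stretched measurement matrices of $Q$-preserving measurements. A subgroup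 $\mathcal{G}\subseteq\mathrm{O}(d^2)$ is stochastic if every $R\in\mathcal{G}$ satisfies $R_{ij}\ge-\frac1d$ for all $i,j$ and $Rc=c$. For a stochastic subgroup $\mathcal{G}$ and $R\in\mathcal{G}$ set $s^R_i(j)=\frac{dR_{ij}+1}{d(d+1)}$; the orbital germ of $\mathcal{G}$ is $G=\{s^R_i: R\in\mathcal{G},\ i=1,\dots,d^2\}$. A stochastic subgroup is maximal if it is not contained in any strictly larger stochastic subgroup, and strongly maximal if it is maximal and $\overline{\mathrm{conv}}$ of its orbital germ is a qplex. *)

From mathcomp Require Import all_boot.
From Stdlib Require Import Reals.
Set Implicit Arguments. Unset Strict Implicit.
Open Scope R_scope.

(* index set {1..d^2} ~ 'I_(d*d) *)
Definition vec (d : nat) := 'I_(d * d)%nat -> R.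
Definition mat (d : nat) := 'I_(d * d)%nat -> 'I_(d * d)%nat -> R.

Definition sumI (n : nat) (F : 'I_n -> R) : R := \big[Rplus/0]_(i < n) F i.

Definition inner (d : nat) (u v : vec d) : R := sumI (fun i => u i * v i).
Definition vnorm (d : nat) (u : vec d) : R := sqrt (inner u u).
Definition vsub (d : nat) (u v : vec d) : vec d := fun i => u i - v i.

Definition dR (d : nat) : R := INR d.

Definition cvec (d : nat) : vec d := fun _ => 1 / (dR d * dR d).
Arguments cvec d : clear implicits.

Definition Simplex (d : nat) (p : vec d) : Prop :=
  (forall i, 0 <= p i) /\ sumI p = 1.

Definition Hplane (d : nat) (u : vec d) : Prop := sumI u = 1.

Definition polar (d : nat) (A : vec d -> Prop) : vec d -> Prop :=
  fun u => Hplane u /\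
    forall v, A v -> inner u v >= 1 / (dR d * (dR d + 1)).

Definition r_out (d : nat) : R :=
  sqrt ((dR d - 1) / (dR d * dR d * (dR d + 1))).

Definition OutBall (d : nat) (u : vec d) : Prop :=
  Hplane u /\ vnorm (vsub u (cvec d)) <= r_out d.

Definition qplex (d : nat) (Q : vec d -> Prop) : Prop :=
  (forall q, Q q -> Simplex q /\ OutBall q) /\
  (forall u, polar Q u <-> Q u).

(* measurements: r i j = r(i|j) *)
Definition measurement (d : nat) (r : mat d) : Prop :=
  (forall i j, 0 <= r i j) /\ (forall j, sumI (fun i => r i j) = 1).

Definition meas_apply (d : nat) (r : mat d) (q : vec d) : vec d :=
  fun i => sumI (fun j => ((dR d + 1) * q j - 1 / dR d) * r i j).

Definition Q_preserving (d : nat) (Q : vec d -> Prop) (r : mat d) : Prop :=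
  forall u, (exists q, Q q /\ u = meas_apply r q) <-> Q u.

Definition stretched (d : nat) (r : mat d) : mat d :=
  fun i j => (dR d + 1) * r i j - (1 / dR d) * sumI (fun k => r i k).

Definition pres_group (d : nat) (Q : vec d -> Prop) : mat d -> Prop :=
  fun M => exists r, measurement r /\ Q_preserving Q r /\ M = stretched r.

Definition mmul (d : nat) (A B : mat d) : mat d :=
  fun i k => sumI (fun j => A i j * B j k).
Definition mtr (d : nat) (A : mat d) : mat d := fun i j => A j i.
Definition mid (d : nat) : mat d := fun i j => if i == j then 1 else 0.
Arguments mid d : clear implicits.

Definition orthogonal (d : nat) (M : mat d) : Prop := mmul M (mtr M) = mid d.

Definition subgroupO (d : nat) (S : mat d -> Prop) : Prop :=
  (forall M, S M -> orthogonal M) /\ S (mid d) /\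
  (forall A B, S A -> S B -> S (mmul A B)) /\
  (forall A, S A -> S (mtr A)).

Definition stochastic (d : nat) (S : mat d -> Prop) : Prop :=
  subgroupO S /\
  forall M, S M ->
    (forall i j, M i j >= - (1 / dR d)) /\
    (forall i, sumI (fun j => M i j * cvec d j) = cvec d i).

Definition orbital_germ (d : nat) (S : mat d -> Prop) : vec d -> Prop :=
  fun s => exists M i, S M /\
    s = (fun j => (dR d * M i j + 1) / (dR d * (dR d + 1))).

Definition maximal_stochastic (d : nat) (S : mat d -> Prop) : Prop :=
  stochastic S /\
  forall S' : mat d -> Prop, stochastic S' ->
    (forall M, S M -> S' M) -> (forall M, S' M -> S M).

Definition conv (d : nat) (A : vec d -> Prop) : vec d -> Prop :=
  fun u => exists (k : nat) (w : 'I_k -> R) (x : 'I_k -> vec d),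
    (forall t, 0 <= w t /\ A (x t)) /\ sumI w = 1 /\
    u = (fun i => sumI (fun t => w t * x t i)).

Definition closure (d : nat) (A : vec d -> Prop) : vec d -> Prop :=
  fun u => forall eps, eps > 0 -> exists v, A v /\ vnorm (vsub u v) < eps.

Definition clconv (d : nat) (A : vec d -> Prop) : vec d -> Prop :=
  closure (conv A).

Definition strongly_maximal (d : nat) (S : mat d -> Prop) : Prop :=
  maximal_stochastic S /\ qplex (clconv (orbital_germ S)).

(* The closed convex hull Q0 of the germ is mapped onto itself by every M in the
   group, since M sends the germ point s^N_i to s^(N M^T)_i and is an isometry; so the
   group lies in G(Q0).  Conversely G(Q) is a stochastic group for every qplex Q: a
   stretched matrix preserving Q has unit row sums (pair the image of the antipode of
   a preimage of a basis point with that basis point), entries >= -1/d, and is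
   orthogonal, because two points of Q whose inner product reaches the maximum
   2/(d(d+1)) coincide.  Maximality therefore gives G = G(Q0).  If also G = G(Q), every
   germ point lies in Q* = Q, hence Q0 is contained in Q, as polars are closed and
   convex; taking polars reverses the inclusion, so Q = Q0. *)

From Pilot Require Import Defs.
From mathcomp Require Import all_boot all_algebra.
From Stdlib Require Import Reals Lra FunctionalExtensionality.
From mathcomp Require Import Rstruct.
Open Scope R_scope.
Set Implicit Arguments. Unset Strict Implicit.

Lemma sumI_ext n (F G : 'I_n -> R) : (forall i, F i = G i) -> sumI F = sumI G.
Proof. by move=> FG; apply: eq_bigr => i _; apply: FG. Qed.

Lemma sumI_scal n a (F : 'I_n -> R) : sumI (fun i => a * F i) = a * sumI F.
Proof. by rewrite /sumI big_distrr. Qed.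

Lemma sumI_lin n a b (F G : 'I_n -> R) :
  sumI (fun i => a * F i + b * G i) = a * sumI F + b * sumI G.
Proof. by rewrite /sumI big_split /= -!big_distrr. Qed.

Lemma sumI_sub n (F G : 'I_n -> R) : sumI (fun i => F i - G i) = sumI F - sumI G.
Proof.
rewrite (sumI_ext (G := fun i => 1 * F i + (-1) * G i)) ?sumI_lin; [ring | move=> i; ring].
Qed.

Lemma sumI_const n a : sumI (fun _ : 'I_n => a) = INR n * a.
Proof.
rewrite /sumI; elim: n => [|n IH]; first by rewrite big_ord0 /=; ring.
rewrite big_ord_recr /= IH.
by change (INR n * a + a = INR n.+1 * a); rewrite S_INR; ring.
Qed.

Lemma sumI_swap n m (F : 'I_n -> 'I_m -> R) :
  sumI (fun i => sumI (fun j => F i j)) = sumI (fun j => sumI (fun i => F i j)).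
Proof. exact: exchange_big. Qed.

Lemma sumI_le n (F G : 'I_n -> R) : (forall i, F i <= G i) -> sumI F <= sumI G.
Proof. by move=> FG; rewrite /sumI; elim/big_ind2: _ => // *; lra. Qed.

Lemma sumI_ge0 n (F : 'I_n -> R) : (forall i, 0 <= F i) -> 0 <= sumI F.
Proof. by move=> F0; have := sumI_le F0; rewrite sumI_const; lra. Qed.

Lemma sumI_D1 n (F : 'I_n -> R) i :
  sumI F = F i + sumI (fun j => if j == i then 0 else F j).
Proof.
rewrite /sumI (bigD1 i) // [in RHS](bigD1 i) //= eqxx Rplus_0_l.
by congr (_ + _); apply: eq_bigr => j /negbTE ->.
Qed.

Lemma sumI_eq0 n (F : 'I_n -> R) :
  (forall i, 0 <= F i) -> sumI F = 0 -> forall i, F i = 0.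
Proof.
move=> F0 + i; rewrite (sumI_D1 F i).
have : 0 <= sumI (fun j => if j == i then 0 else F j).
  by apply: sumI_ge0 => j; case: (j == i) => //; lra.
by have := F0 i; lra.
Qed.

Lemma sumI_delta n (F : 'I_n -> R) i :
  sumI (fun j => (if i == j then 1 else 0) * F j) = F i.
Proof.
rewrite (sumI_D1 _ i) eqxx (sumI_ext (G := fun _ => 0)) ?sumI_const; first ring.
by move=> j; case E: (j == i) => //; rewrite eq_sym E; ring.
Qed.

Lemma Rabs_sumI_le n (F : 'I_n -> R) : Rabs (sumI F) <= sumI (fun i => Rabs (F i)).
Proof.
rewrite /sumI; elim/big_ind2: _ => [|s1 t1 s2 t2 st1 st2|i _]; first by rewrite Rabs_R0; lra.
  by have := Rabs_triang t1 t2; lra.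
exact: Rle_refl.
Qed.

Lemma eq_of_abs_le_eps a b : (forall eps, 0 < eps -> Rabs (a - b) <= eps) -> a = b.
Proof.
move=> ab; apply: Rle_antisym; apply: Rle_plus_epsilon => eps /ab ab_eps.
  by have := Rle_abs (a - b); lra.
by have := Rle_abs (b - a); rewrite Rabs_minus_sym; lra.
Qed.

Lemma div_ge0_num a b : 0 < b -> 0 <= a / b -> 0 <= a.
Proof.
move=> b0 ab; have := Rmult_le_pos _ _ ab (Rlt_le _ _ b0).
by rewrite /Rdiv Rmult_assoc Rinv_l ?Rmult_1_r //; lra.
Qed.

Lemma dR_ge2 d : (2 <= d)%nat -> 2 <= dR d.
Proof. by move=> /leP d2; rewrite /dR; change 2 with (INR 2); apply: le_INR. Qed.

Section Linear.
Variable d : nat.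
Hypothesis d_ge2 : 2 <= dR d.
Implicit Types (A B M N : mat d) (u v x : vec d).

Definition mxv M x : vec d := fun i => sumI (fun j => M i j * x j).
Definition rowsum M i := sumI (M i).
Definition colsum M j := sumI (fun i => M i j).
Definition ones : vec d := fun _ => 1.

Definition germ_vec M i : vec d := fun j => (dR d * M i j + 1) / (dR d * (dR d + 1)).

Lemma INR_dd : INR (d * d) = dR d * dR d.
Proof. by rewrite /dR -mult_INR. Qed.

Lemma mxv_mmul A B x : mxv A (mxv B x) = mxv (mmul A B) x.
Proof.
apply: functional_extensionality => i; rewrite /mxv /mmul.
rewrite (sumI_ext (G := fun j => sumI (fun k => A i j * (B j k * x k)))); last first.
  by move=> j; rewrite /= -sumI_scal.
by rewrite sumI_swap; apply: sumI_ext => k; rewrite /sumI big_distrl; apply: eq_bigr => j _ /=; ring.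
Qed.

Lemma mxv_mid x : mxv (mid d) x = x.
Proof. by apply: functional_extensionality => i; rewrite /mxv /mid sumI_delta. Qed.

Lemma mxv_lin M a b x y :
  mxv M (fun j => a * x j + b * y j) = fun i => a * mxv M x i + b * mxv M y i.
Proof.
by apply: functional_extensionality => i; rewrite /mxv -sumI_lin; apply: sumI_ext => j; ring.
Qed.

Lemma mxv_vsub M u v : mxv M (vsub u v) = vsub (mxv M u) (mxv M v).
Proof.
by apply: functional_extensionality => i; rewrite /mxv /vsub -sumI_sub; apply: sumI_ext => j; ring.
Qed.

Lemma mxv_comb M k (w : 'I_k -> R) (x : 'I_k -> vec d) :
  mxv M (fun i => sumI (fun t => w t * x t i)) = fun l => sumI (fun t => w t * mxv M (x t) l).
Proof.
apply: functional_extensionality => l; rewrite /mxv.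
rewrite (sumI_ext (G := fun j => sumI (fun t => w t * (M l j * x t j)))); last first.
  by move=> j; rewrite -sumI_scal; apply: sumI_ext => t; ring.
by rewrite sumI_swap; apply: sumI_ext => t; rewrite sumI_scal.
Qed.

Lemma inner_sym u v : inner u v = inner v u.
Proof. by apply: sumI_ext => i; ring. Qed.

Lemma inner_lin a b x y v :
  inner (fun j => a * x j + b * y j) v = a * inner x v + b * inner y v.
Proof. by rewrite /inner -sumI_lin; apply: sumI_ext => j; ring. Qed.

Lemma inner_mxv_mtr M x y : inner (mxv (mtr M) x) y = inner x (mxv M y).
Proof.
rewrite /inner /mxv /mtr.
rewrite (sumI_ext (G := fun j => sumI (fun i => x i * (M i j * y j)))); last first.
  by move=> j; rewrite /sumI big_distrl; apply: eq_bigr => i _ /=; ring.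
by rewrite sumI_swap; apply: sumI_ext => i; rewrite sumI_scal.
Qed.

Lemma inner_vsub u v : inner (vsub u v) (vsub u v) = inner u u - 2 * inner u v + inner v v.
Proof.
rewrite /inner /vsub (sumI_ext (G := fun i => 1 * (u i * u i - 2 * (u i * v i)) + 1 * (v i * v i))).
  by rewrite sumI_lin sumI_sub sumI_scal; ring.
by move=> i; ring.
Qed.

Lemma inner_ge0 x : 0 <= inner x x.
Proof. by apply: sumI_ge0 => i; nra. Qed.

Lemma inner_self_eq0 x : inner x x = 0 -> forall i, x i = 0.
Proof. by move=> /sumI_eq0 x0 i; have := x0 (fun j => Rle_0_sqr (x j)) i; rewrite /Rsqr; nra. Qed.

Lemma sumI_mxv M x : (forall j, colsum M j = 1) -> sumI (mxv M x) = sumI x.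
Proof.
move=> cM; rewrite /mxv sumI_swap; apply: sumI_ext => j.
by rewrite /sumI -big_distrl /= -/(sumI _) -/(colsum M j) cM; ring.
Qed.

Lemma rowsum_mmul A B i : (forall j, rowsum B j = 1) -> rowsum (mmul A B) i = rowsum A i.
Proof.
move=> rB; rewrite /rowsum /mmul sumI_swap; apply: sumI_ext => j.
by rewrite sumI_scal -/(rowsum B j) rB; ring.
Qed.

Lemma colsum_mmul A B k : (forall j, colsum A j = 1) -> colsum (mmul A B) k = colsum B k.
Proof.
move=> cA; rewrite /colsum /mmul sumI_swap; apply: sumI_ext => j.
by rewrite /sumI -big_distrl /= -/(sumI _) -/(colsum A j) cA; ring.
Qed.

Lemma rowsum_mid k : rowsum (mid d) k = 1.
Proof. by rewrite /rowsum -(sumI_delta (fun _ => 1) k); apply: sumI_ext => j; rewrite /mid; ring. Qed.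

Lemma colsum_mid k : colsum (mid d) k = 1.
Proof.
rewrite /colsum -(sumI_delta (fun _ => 1) k); apply: sumI_ext => j.
by rewrite /mid eq_sym; ring.
Qed.

Lemma mxv_cvec M k : mxv M (cvec d) k = rowsum M k / (dR d * dR d).
Proof. by rewrite /mxv /cvec /rowsum /Rdiv [RHS]Rmult_comm -sumI_scal; apply: sumI_ext => j; ring. Qed.

Lemma inner_cvec v : inner (cvec d) v = sumI v / (dR d * dR d).
Proof. by rewrite /inner /cvec /Rdiv [RHS]Rmult_comm -sumI_scal; apply: sumI_ext => j; ring. Qed.

Lemma sum_cvec : sumI (cvec d) = 1.
Proof. by rewrite /cvec sumI_const INR_dd; field; lra. Qed.

Lemma mxv_ones M : (forall i, rowsum M i = 1) -> mxv M ones = ones.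
Proof.
move=> rM; apply: functional_extensionality => i; rewrite /ones -[RHS](rM i).
by apply: sumI_ext => j; rewrite /ones; ring.
Qed.

Lemma mxv_delta M k i : mxv M (mid d k) i = M i k.
Proof. by rewrite /mxv -(sumI_delta (M i) k); apply: sumI_ext => j; rewrite /mid; ring. Qed.

Definition matrix_of M : 'M[R]_(d * d) := \matrix_(i, j) M i j.

Lemma matrix_of_mmul A B : matrix_of (mmul A B) = mulmx (matrix_of A) (matrix_of B).
Proof. by apply/matrixP => i j; rewrite !mxE; apply: eq_bigr => k _; rewrite !mxE. Qed.

Lemma matrix_of_mid : matrix_of (mid d) = scalar_mx 1.
Proof. by apply/matrixP => i j; rewrite !mxE /mid; case: (i == j). Qed.

Lemma mmul_inv A B : mmul A B = mid d -> mmul B A = mid d.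
Proof.
move=> AB; have /mulmx1C BA : mulmx (matrix_of A) (matrix_of B) = scalar_mx 1.
  by rewrite -matrix_of_mmul AB matrix_of_mid.
apply: functional_extensionality => i; apply: functional_extensionality => j.
by have := congr1 (fun C : 'M[R]_(d * d) => C i j) BA; rewrite -matrix_of_mmul -matrix_of_mid !mxE.
Qed.

Lemma sum_germ_vec M i :
  sumI (germ_vec M i) = (dR d * rowsum M i + dR d * dR d) / (dR d * (dR d + 1)).
Proof.
rewrite /germ_vec (sumI_ext (G := fun j => (dR d / (dR d * (dR d + 1))) * M i j
   + (1 / (dR d * (dR d + 1))) * 1)); last by move=> j; rewrite /Rdiv; ring.
by rewrite sumI_lin sumI_const INR_dd /rowsum /Rdiv; ring.
Qed.

Lemma inner_germ_vec M i q :
  inner (germ_vec M i) q = (dR d * mxv M q i + sumI q) / (dR d * (dR d + 1)).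
Proof.
rewrite /inner /germ_vec (sumI_ext (G := fun j => (dR d / (dR d * (dR d + 1))) * (M i j * q j)
   + (1 / (dR d * (dR d + 1))) * q j)); last by move=> j; rewrite /Rdiv; ring.
by rewrite sumI_lin /mxv /Rdiv; ring.
Qed.

Lemma mxv_germ_vec M N i : (forall k, rowsum M k = 1) ->
  mxv M (germ_vec N i) = germ_vec (mmul N (mtr M)) i.
Proof.
move=> rM; apply: functional_extensionality => k.
rewrite /germ_vec -[X in (_ + X) / _](rM k) /mxv (sumI_ext (G := fun j => (dR d / (dR d * (dR d + 1))) * (N i j * M k j)
   + (1 / (dR d * (dR d + 1))) * M k j)); last by move=> j; rewrite /Rdiv; ring.
by rewrite sumI_lin /mmul /mtr /rowsum /Rdiv; ring.
Qed.

Lemma germ_vec_mid_norm k : inner (germ_vec (mid d) k) (germ_vec (mid d) k) = 2 / (dR d * (dR d + 1)).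
Proof.
rewrite inner_germ_vec mxv_mid sum_germ_vec rowsum_mid /germ_vec /mid eqxx.
by field; lra.
Qed.

Lemma mid_germ_vec k :
  mid d k = fun j => (dR d + 1) * germ_vec (mid d) k j + (- (1 / dR d)) * ones j.
Proof. by apply: functional_extensionality => j; rewrite /germ_vec /ones; field; lra. Qed.

Lemma meas_apply_stretched r q : sumI q = 1 -> meas_apply r q = mxv (stretched r) q.
Proof.
move=> sq; apply: functional_extensionality => i; rewrite /meas_apply /mxv /stretched.
rewrite (sumI_ext (F := fun j => _ * r i j)
  (G := fun j => (dR d + 1) * (r i j * q j) + (- (1 / dR d)) * r i j)); last by move=> j; ring.
rewrite (sumI_ext (F := fun j => _ * q j)
  (G := fun j => (dR d + 1) * (r i j * q j) + (- (1 / dR d) * sumI (fun k => r i k)) * q j)); last by move=> j; ring.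
by rewrite !sumI_lin sq Rmult_1_r.
Qed.

Lemma colsum_stretched r j : measurement r -> colsum (stretched r) j = 1.
Proof.
move=> [_ r1]; rewrite /colsum /stretched.
rewrite (sumI_ext (G := fun i => (dR d + 1) * r i j + (- (1 / dR d)) * sumI (fun k => r i k)));
  last by move=> i; ring.
rewrite sumI_lin r1 sumI_swap (sumI_ext (G := fun _ => 1)) // sumI_const INR_dd.
by field; lra.
Qed.

End Linear.

Section Qplex.
Variables (d : nat) (Q : vec d -> Prop).
Hypotheses (d_ge2 : 2 <= dR d) (qpQ : qplex Q).
Implicit Types (q u v : vec d).

Lemma qplex_simplex q : Q q -> (forall i, 0 <= q i) /\ sumI q = 1.
Proof. by move=> /(proj1 qpQ) [[]]. Qed.

Lemma qplex_of_polar u : polar Q u -> Q u.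
Proof. exact: (proj1 (proj2 qpQ u)). Qed.

Lemma qplex_inner_ge u v : Q u -> Q v -> 1 / (dR d * (dR d + 1)) <= inner u v.
Proof. by move=> /(proj2 (proj2 qpQ u)) [_ uQ] /uQ; apply: Rge_le. Qed.

Lemma qplex_norm_le q : Q q -> inner q q <= 2 / (dR d * (dR d + 1)).
Proof.
move=> Qq; have [_ sq] := qplex_simplex Qq; have [_ [_]] := proj1 qpQ q Qq.
have r0 : 0 <= (dR d - 1) / (dR d * dR d * (dR d + 1)).
  by apply: Rlt_le; apply: Rdiv_lt_0_compat; nra.
rewrite /vnorm /r_out => /(sqrt_le_0 _ _ (inner_ge0 _) r0).
rewrite inner_vsub (inner_sym q) !inner_cvec sq sum_cvec //.
have E : (dR d - 1) / (dR d * dR d * (dR d + 1)) + 1 / (dR d * dR d) = 2 / (dR d * (dR d + 1)).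
  by field; lra.
have E2 : 2 * (1 / (dR d * dR d)) = 1 / (dR d * dR d) + 1 / (dR d * dR d) by field; lra.
lra.
Qed.

Lemma qplex_inner_le u v : Q u -> Q v -> inner u v <= 2 / (dR d * (dR d + 1)).
Proof.
move=> Qu Qv; have := inner_ge0 (vsub u v); rewrite inner_vsub.
by have := qplex_norm_le Qu; have := qplex_norm_le Qv; lra.
Qed.

Lemma qplex_inner_max_eq u v : Q u -> Q v -> inner u v = 2 / (dR d * (dR d + 1)) -> u = v.
Proof.
move=> Qu Qv uv; have : inner (vsub u v) (vsub u v) = 0.
  by have := inner_ge0 (vsub u v); rewrite inner_vsub; have := qplex_norm_le Qu;
    have := qplex_norm_le Qv; lra.
move=> /inner_self_eq0 uv0; apply: functional_extensionality => i.
by have := uv0 i; rewrite /vsub; lra.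
Qed.

Lemma basis_in_qplex k : Q (germ_vec (mid d) k).
Proof.
apply: qplex_of_polar; split.
  by rewrite /Hplane sum_germ_vec rowsum_mid; field; lra.
move=> q Qq; apply: Rle_ge; rewrite inner_germ_vec mxv_mid.
have [q0 ->] := qplex_simplex Qq.
apply: Rmult_le_compat_r; first by apply: Rlt_le; apply: Rinv_0_lt_compat; nra.
by have := q0 k; nra.
Qed.

Definition antipode q : vec d :=
  fun j => (dR d / (dR d - 1)) * cvec d j + (-1 / (dR d - 1)) * q j.

Lemma antipode_in_qplex q : Q q -> Q (antipode q).
Proof.
move=> Qq; apply: qplex_of_polar; have [_ sq] := qplex_simplex Qq; split.
  by rewrite /Hplane /antipode sumI_lin sq sum_cvec //; field; lra.
move=> v Qv; apply: Rle_ge; rewrite /antipode inner_lin inner_cvec (proj2 (qplex_simplex Qv)).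
have := qplex_inner_le Qq Qv; set X := inner q v => HX.
have E : dR d / (dR d - 1) * (1 / (dR d * dR d)) + -1 / (dR d - 1) * X - 1 / (dR d * (dR d + 1))
   = (2 / (dR d * (dR d + 1)) - X) / (dR d - 1) by field; lra.
have : 0 <= (2 / (dR d * (dR d + 1)) - X) / (dR d - 1).
  by apply: Rmult_le_pos; [lra | apply: Rlt_le; apply: Rinv_0_lt_compat; lra].
lra.
Qed.

End Qplex.

Section Preservation.
Variables (d : nat) (Q : vec d -> Prop).
Hypotheses (d_ge2 : 2 <= dR d) (qpQ : qplex Q).
Implicit Types (A B M : mat d) (q u : vec d).

Definition maps_into M := forall q, Q q -> Q (mxv M q).
Definition preserves M := forall u, (exists q, Q q /\ u = mxv M q) <-> Q u.

Lemma preserves_maps_into M : preserves M -> maps_into M.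
Proof. by move=> pM q Qq; apply/pM; exists q. Qed.

Lemma entry_ge M : (forall i, rowsum M i = 1) -> maps_into M ->
  forall i j, - (1 / dR d) <= M i j.
Proof.
move=> rM MQ i j; have := proj1 (qplex_simplex qpQ (MQ _ (basis_in_qplex d_ge2 qpQ j))) i.
rewrite mxv_germ_vec // /germ_vec /mmul /mtr /mid sumI_delta.
have dd : 0 < dR d * (dR d + 1) by nra.
move=> /(div_ge0_num dd) Mij.
apply: (Rmult_le_reg_l (dR d)); first lra.
by rewrite (_ : dR d * - (1 / dR d) = -1); [lra | field; lra].
Qed.

(* Pairing M (antipode q) with e_k = M q leaves (s_k - 1) / ((d - 1) d (d + 1)),
   where s_k is the k-th row sum. *)
Lemma rowsum_ge1 M : (forall j, colsum M j = 1) -> preserves M -> forall k, 1 <= rowsum M k.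
Proof.
move=> cM pM k; have ek_in := basis_in_qplex d_ge2 qpQ k.
have [q [Qq ek]] := proj2 (pM _) ek_in.
have := qplex_inner_ge qpQ (preserves_maps_into pM (antipode_in_qplex d_ge2 qpQ Qq)) ek_in.
rewrite /antipode mxv_lin -ek inner_lin germ_vec_mid_norm //.
rewrite (inner_sym (mxv M (cvec d))) inner_germ_vec mxv_mid sumI_mxv // sum_cvec // mxv_cvec.
set s := rowsum M k => H.
have P : 0 < (dR d - 1) * dR d * (dR d + 1) by apply: Rmult_lt_0_compat; nra.
suff : 0 <= (s - 1) / ((dR d - 1) * dR d * (dR d + 1)) by move/(div_ge0_num P); lra.
have -> : (s - 1) / ((dR d - 1) * dR d * (dR d + 1)) =
  dR d / (dR d - 1) * ((dR d * (s / (dR d * dR d)) + 1) / (dR d * (dR d + 1))) +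
  -1 / (dR d - 1) * (2 / (dR d * (dR d + 1))) - 1 / (dR d * (dR d + 1)) by field; lra.
lra.
Qed.

Lemma rowsum_of_preserves M : (forall j, colsum M j = 1) -> preserves M ->
  forall k, rowsum M k = 1.
Proof.
move=> cM pM k; have ge1 := rowsum_ge1 cM pM.
have : sumI (fun i => rowsum M i - 1) = 0.
  rewrite sumI_sub (_ : sumI (rowsum M) = sumI (colsum M)); last exact: sumI_swap.
  by rewrite (sumI_ext (G := fun _ => 1) cM); ring.
have r0 i : 0 <= rowsum M i - 1 by have := ge1 i; lra.
by move=> /(sumI_eq0 r0) /(_ k); lra.
Qed.

Lemma maps_into_mtr M : (forall i, rowsum M i = 1) -> maps_into M -> maps_into (mtr M).
Proof.
move=> rM MQ w Qw; apply: (qplex_of_polar qpQ); split.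
  by rewrite /Hplane sumI_mxv; [exact: (proj2 (qplex_simplex qpQ Qw)) | exact: rM].
by move=> q Qq; apply: Rle_ge; rewrite inner_mxv_mtr; apply: qplex_inner_ge (MQ _ Qq).
Qed.

(* M^T e_k and the preimage of e_k under M both lie in Q and have inner product
   |e_k|^2, the largest possible value; so they coincide. *)
Lemma preserves_orthogonal M : (forall i, rowsum M i = 1) -> (forall j, colsum M j = 1) ->
  preserves M -> mmul M (mtr M) = mid d.
Proof.
move=> rM cM pM.
have MMt_basis k : mxv M (mxv (mtr M) (germ_vec (mid d) k)) = germ_vec (mid d) k.
  have ek_in := basis_in_qplex d_ge2 qpQ k.
  have [q [Qq ek]] := proj2 (pM _) ek_in.
  suff -> : mxv (mtr M) (germ_vec (mid d) k) = q by [].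
  apply: (qplex_inner_max_eq d_ge2 qpQ (maps_into_mtr rM (preserves_maps_into pM) ek_in) Qq).
  by rewrite inner_mxv_mtr -ek germ_vec_mid_norm.
have MMt_delta k : mxv M (mxv (mtr M) (mid d k)) = mid d k.
  by rewrite mid_germ_vec // (mxv_lin (mtr M)) (mxv_ones (M := mtr M)) // mxv_lin MMt_basis mxv_ones.
apply: functional_extensionality => i; apply: functional_extensionality => k.
by rewrite -mxv_delta -mxv_mmul MMt_delta /mid eq_sym.
Qed.

Lemma Q_preserving_stretched r : Q_preserving Q r <-> preserves (stretched r).
Proof.
have E q : Q q -> meas_apply r q = mxv (stretched r) q.
  by move=> Qq; apply: meas_apply_stretched; exact: (proj2 (qplex_simplex qpQ Qq)).
by split=> pr u; rewrite -(pr u); split=> -[q [Qq ->]]; exists q; rewrite E.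
Qed.

Lemma pres_groupP M : pres_group Q M <->
  [/\ forall i, rowsum M i = 1, forall j, colsum M j = 1 & preserves M].
Proof.
split.
  move=> [r [mr [/Q_preserving_stretched pr ->]]].
  have cM j := colsum_stretched d_ge2 j mr.
  by split => //; apply: rowsum_of_preserves.
move=> [rM cM pM]; have Mge := entry_ge rM (preserves_maps_into pM).
pose r i j := (M i j + 1 / dR d) / (dR d + 1).
have r_row i : sumI (fun k => r i k) = 1.
  rewrite (sumI_ext (G := fun k => (1 / (dR d + 1)) * M i k + (1 / (dR d * (dR d + 1))) * 1));
    last by move=> k; rewrite /r; field; lra.
  by rewrite sumI_lin sumI_const INR_dd -/(rowsum M i) rM; field; lra.
have rM_eq : stretched r = M.
  apply: functional_extensionality => i; apply: functional_extensionality => j.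
  by rewrite /stretched r_row /r; field; lra.
exists r; split; [split | split; last by []].
- move=> i j; apply: Rmult_le_pos; first by have := Mge i j; lra.
  by apply: Rlt_le; apply: Rinv_0_lt_compat; lra.
- move=> j; rewrite (sumI_ext (G := fun i => (1 / (dR d + 1)) * M i j + (1 / (dR d * (dR d + 1))) * 1));
    last by move=> i; rewrite /r; field; lra.
  by rewrite sumI_lin sumI_const INR_dd -/(colsum M j) cM; field; lra.
- by apply/Q_preserving_stretched; rewrite rM_eq.
Qed.

Lemma preserves_mmul A B : preserves A -> preserves B -> preserves (mmul A B).
Proof.
move=> pA pB u; rewrite -(pA u); split.
  move=> [q [Qq ->]]; exists (mxv B q); split; last by rewrite mxv_mmul.
  exact: preserves_maps_into pB _ Qq.
move=> [w [Qw ->]]; have [q [Qq ->]] := proj2 (pB w) Qw.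
by exists q; rewrite mxv_mmul.
Qed.

Lemma preserves_mtr M : (forall i, rowsum M i = 1) -> (forall j, colsum M j = 1) ->
  preserves M -> preserves (mtr M).
Proof.
move=> rM cM pM u; split.
  by move=> [q [Qq ->]]; exact: maps_into_mtr rM (preserves_maps_into pM) _ Qq.
move=> Qu; exists (mxv M u); split; first exact: preserves_maps_into pM _ Qu.
by rewrite mxv_mmul (mmul_inv (preserves_orthogonal rM cM pM)) mxv_mid.
Qed.

Lemma pres_group_stochastic : stochastic (pres_group Q).
Proof.
split; first split.
- by move=> M /pres_groupP [rM cM pM]; exact: preserves_orthogonal.
- split.
    apply/pres_groupP; split; [exact: rowsum_mid | exact: colsum_mid |].
    by move=> u; split => [[q [Qq ->]] | Qu]; [rewrite mxv_mid | exists u; rewrite mxv_mid].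
  split.
  + move=> A B /pres_groupP [rA cA pA] /pres_groupP [rB cB pB]; apply/pres_groupP; split.
    * by move=> i; rewrite rowsum_mmul.
    * by move=> j; rewrite colsum_mmul.
    * exact: preserves_mmul.
  + move=> A /pres_groupP [rA cA pA]; apply/pres_groupP; split; [exact: cA | exact: rA |].
    exact: preserves_mtr.
- move=> M /pres_groupP [rM cM pM]; split.
  + by move=> i j; apply: Rle_ge; apply: entry_ge => //; exact: preserves_maps_into.
  + by move=> i; change (mxv M (cvec d) i = cvec d i); rewrite mxv_cvec rM.
Qed.

End Preservation.

Section StochasticGroup.
Variables (d : nat) (S : mat d -> Prop).
Hypotheses (d_ge2 : 2 <= dR d) (stS : stochastic S).
Implicit Types (A B M : mat d) (u : vec d).

Lemma stochastic_mtr M : S M -> S (mtr M).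
Proof. by have [[_ [_ [_ trS]]] _] := stS; apply: trS. Qed.

Lemma stochastic_mmul A B : S A -> S B -> S (mmul A B).
Proof. by have [[_ [_ [mulS _]]] _] := stS; apply: mulS. Qed.

Lemma stochastic_orthogonal M : S M -> mmul M (mtr M) = mid d.
Proof. by have [[orthS _] _] := stS; apply: orthS. Qed.

Lemma stochastic_rowsum M : S M -> forall i, rowsum M i = 1.
Proof.
move=> SM i; have [_ /(_ M SM) [_ /(_ i)]] := stS.
change (sumI (fun j => M i j * cvec d j)) with (mxv M (cvec d) i).
rewrite mxv_cvec /cvec => E.
have -> : rowsum M i = rowsum M i / (dR d * dR d) * (dR d * dR d) by field; lra.
by rewrite E; field; lra.
Qed.

Lemma stochastic_colsum M : S M -> forall j, colsum M j = 1.
Proof. by move=> /stochastic_mtr; apply: stochastic_rowsum. Qed.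

Lemma vnorm_mxv M x : S M -> vnorm (mxv M x) = vnorm x.
Proof.
move=> SM; rewrite /vnorm -[X in inner X _]/(mxv (mtr (mtr M)) x) inner_mxv_mtr mxv_mmul.
by rewrite (stochastic_orthogonal (stochastic_mtr SM)) mxv_mid.
Qed.

Lemma clconv_germ_mxv M u : S M ->
  clconv (orbital_germ S) u -> clconv (orbital_germ S) (mxv M u).
Proof.
move=> SM Su eps eps0; have [v [[k [w [x [xS [w1 ->]]]]] uv]] := Su eps eps0.
exists (mxv M (fun i => sumI (fun t => w t * x t i))); split.
  exists k, w, (fun t => mxv M (x t)); split; last by split => //; rewrite mxv_comb.
  move=> t; have [w0 [N [i [SN ->]]]] := xS t; split => //.
  exists (mmul N (mtr M)), i; split; first exact: stochastic_mmul SN (stochastic_mtr SM).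
  exact: mxv_germ_vec (stochastic_rowsum SM).
by rewrite -mxv_vsub vnorm_mxv.
Qed.

Lemma stochastic_sub_pres_group M : qplex (clconv (orbital_germ S)) -> S M ->
  pres_group (clconv (orbital_germ S)) M.
Proof.
move=> qpQ SM; apply/(pres_groupP d_ge2 qpQ); split.
- exact: stochastic_rowsum.
- exact: stochastic_colsum.
- move=> u; split; first by move=> [q [Qq ->]]; exact: clconv_germ_mxv.
  move=> Qu; exists (mxv (mtr M) u); split; first exact: clconv_germ_mxv (stochastic_mtr SM) _.
  by rewrite mxv_mmul (stochastic_orthogonal SM) mxv_mid.
Qed.

End StochasticGroup.

Section Polar.
Variables (d : nat) (Q : vec d -> Prop).
Hypotheses (d_ge2 : 2 <= dR d) (qpQ : qplex Q).
Implicit Types (P : vec d -> Prop) (q u v x : vec d).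

Lemma qplex_sub_eq Q' : qplex Q' -> (forall u, Q u -> Q' u) -> forall u, Q' u -> Q u.
Proof.
move=> qpQ' QQ' u /(proj2 (proj2 qpQ' u)) [Hu Q'u]; apply: (qplex_of_polar qpQ).
by split => // v Qv; apply: Q'u; apply: QQ'.
Qed.

Lemma conv_sub_polar P : (forall v, P v -> polar Q v) -> forall u, conv P u -> polar Q u.
Proof.
move=> PQ u [k [w [x [xP [w1 ->]]]]]; split.
  rewrite /Hplane sumI_swap -w1; apply: sumI_ext => t.
  by rewrite sumI_scal; have [_ /PQ [-> _]] := xP t; ring.
move=> q Qq; apply: Rle_ge.
have -> : inner (fun i => sumI (fun t => w t * x t i)) q = sumI (fun t => w t * inner (x t) q).
  rewrite /inner (sumI_ext (G := fun i => sumI (fun t => w t * (x t i * q i)))); last first.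
    by move=> i; rewrite /sumI big_distrl; apply: eq_bigr => t _ /=; ring.
  by rewrite sumI_swap; apply: sumI_ext => t; rewrite sumI_scal.
have -> : 1 / (dR d * (dR d + 1)) = 1 / (dR d * (dR d + 1)) * sumI w by rewrite w1 Rmult_1_r.
rewrite -sumI_scal; apply: sumI_le => t.
have [w0 /PQ [_ /(_ q Qq) /Rge_le xq]] := xP t; nra.
Qed.

Lemma coord_le_vnorm x i : Rabs (x i) <= vnorm x.
Proof.
rewrite /vnorm -sqrt_Rsqr_abs; apply: sqrt_le_1_alt.
rewrite /inner (sumI_D1 _ i) /Rsqr; suff : 0 <= sumI (fun j => if j == i then 0 else x j * x j) by lra.
by apply: sumI_ge0 => j; case: (j == i); [lra | nra].
Qed.

Lemma sum_dist_le u v : Rabs (sumI u - sumI v) <= dR d * dR d * vnorm (vsub u v).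
Proof.
rewrite -sumI_sub -INR_dd -sumI_const; apply: Rle_trans (Rabs_sumI_le _) _.
exact: sumI_le (coord_le_vnorm (vsub u v)).
Qed.

Lemma inner_dist_le u v q : Q q -> Rabs (inner u q - inner v q) <= vnorm (vsub u v).
Proof.
move=> Qq; have [q0 q1] := qplex_simplex qpQ Qq.
rewrite -sumI_sub -[X in _ <= X]Rmult_1_r -q1 -sumI_scal; apply: Rle_trans (Rabs_sumI_le _) _.
apply: sumI_le => i; rewrite -Rmult_minus_distr_r Rabs_mult (Rabs_pos_eq _ (q0 i)).
exact: Rmult_le_compat_r (q0 i) (coord_le_vnorm (vsub u v) i).
Qed.

Lemma closure_sub_polar P : (forall v, P v -> polar Q v) ->
  forall u, Defs.closure P u -> polar Q u.
Proof.
move=> PQ u Pu; have dd : 0 < dR d * dR d by nra.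
split.
  rewrite /Hplane; apply: eq_of_abs_le_eps => eps eps0.
  have [v [/PQ [v1 _] uv]] := Pu (eps / (dR d * dR d)) (Rdiv_lt_0_compat _ _ eps0 dd).
  rewrite -v1; apply: Rle_trans (sum_dist_le u v) _.
  have -> : eps = dR d * dR d * (eps / (dR d * dR d)) by field; lra.
  by apply: Rmult_le_compat_l; lra.
move=> q Qq; apply: Rle_ge; apply: Rle_plus_epsilon => eps eps0.
have [v [/PQ [_ /(_ q Qq) /Rge_le vq] uv]] := Pu eps eps0.
have := Rle_abs (inner v q - inner u q); rewrite Rabs_minus_sym.
by have := inner_dist_le u v Qq; lra.
Qed.

Lemma germ_sub_polar S : (forall M, S M -> pres_group Q M) ->
  forall v, orbital_germ S v -> polar Q v.
Proof.
move=> SQ v [M [i [SM ->]]]; have [rM _ pM] := proj1 (pres_groupP d_ge2 qpQ M) (SQ M SM).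
split; first by rewrite /Hplane (sum_germ_vec M i) rM; field; lra.
move=> q Qq; apply: Rle_ge; rewrite (inner_germ_vec M i) (proj2 (qplex_simplex qpQ Qq)).
have := proj1 (qplex_simplex qpQ (preserves_maps_into pM Qq)) i => Mq0.
apply: Rmult_le_compat_r; first by apply: Rlt_le; apply: Rinv_0_lt_compat; nra.
nra.
Qed.

End Polar.

Theorem mainTheorem15 (d : nat) (hd : (2 <= d)%nat) (S : mat d -> Prop)
  (hS : strongly_maximal S) :
  let Q0 := clconv (orbital_germ S) in
  (qplex Q0 /\ (forall M, S M <-> pres_group Q0 M)) /\
  (forall Q : vec d -> Prop, qplex Q -> (forall M, S M <-> pres_group Q M) ->
     forall u, Q u <-> Q0 u).
Proof.
move=> Q0; have d_ge2 := dR_ge2 hd; have [[stS maxS] qpQ0] := hS.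
have S_sub M : S M -> pres_group Q0 M := stochastic_sub_pres_group d_ge2 stS qpQ0.
split.
  split => // M; split; first exact: S_sub.
  exact: maxS _ (pres_group_stochastic d_ge2 qpQ0) S_sub M.
move=> Q qpQ SQ.
have germ_polar := germ_sub_polar d_ge2 qpQ (fun M => proj1 (SQ M)).
have Q0_sub u : Q0 u -> Q u.
  by move=> /(closure_sub_polar d_ge2 qpQ (conv_sub_polar germ_polar)) /(qplex_of_polar qpQ).
by move=> u; split; [exact: (qplex_sub_eq qpQ0 qpQ Q0_sub) | exact: Q0_sub].
Qed.
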